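(* (1) For every $n\in\mathbb{N}$, the alternate Lyndon system $M(u_n\overline{v_n})$, i.e. the set of infinite binary words $x$ with $u_n\overline{v_n}\preceq x_kx_{k+1}\cdots$ for all $k\ge1$, has nonzero (positive) entropy. (2) The alternate Lyndon system $M(\phi^\infty(1))$ associated to $\phi^\infty(1)$ has entropy zero.
   Context: Alternate order: for two words $x=x_1x_2\cdots$, $y=y_1y_2\cdots$ over a finite alphabet of integers, $x\prec y$ iff there is $k$ with $x_i=y_i$ for all $i<k$ and $(-1)^k(x_k-y_k)<0$; $x\preceq y$ iff $x=y$ or $x\prec y$. For an infinite word $(d_i)$, its alternate Lyndon system $M((d_i))$ is the set of infinite words $x$ over $\{0,\dots,d_1\}$ with $d_1d_2\cdots\preceq x_kx_{k+1}\cdots$ for all $k\ge1$; its entropy is $\lim_{n\to\infty}\frac1n\log H_n$, $H_n$ the number of words of length $n$ occurring as finite factors of elements of the system. $\phi$ is the morphism on $\{0,1\}^*$ with $\phi(0)=1$, $\phi(1)=100$; $\phi^\infty(1)=\lim_n\phi^n(1)$. Set $u_n=\phi^n(1)$ for $n\ge0$, $v_0=00$ and $v_n=u_{n-1}u_{n-1}$ for $n>0$. For a finite word $w$, $\overline{w}=www\cdots$. *)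

(* infinite words are nat -> nat (0-based: x 0 = x_1),
   finite words are lists of nat; entropy uses Stdlib reals. *)
From Stdlib Require Import Reals List Arith.
Import ListNotations.
Open Scope R_scope.

Definition iword := nat -> nat.

(* Alternate order.  Paper index k (1-based) corresponds to j = k-1 here;
   (-1)^k (x_k - y_k) < 0  iff  x_k > y_k when k odd (j even),
                               x_k < y_k when k even (j odd). *)
Definition alt_lt (x y : iword) : Prop :=
  exists j : nat, (forall i : nat, (i < j)%nat -> x i = y i) /\
    (if Nat.even j then (y j < x j)%nat else (x j < y j)%nat).

Definition alt_le (x y : iword) : Prop :=
  (forall i : nat, x i = y i) \/ alt_lt x y.

Definition shift (x : iword) (k : nat) : iword := fun i => x (k + i)%nat.

(* the alternate Lyndon system M(d): words over {0,...,d_1}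
   all of whose suffixes are >= d in the alternate order *)
Definition in_M (d x : iword) : Prop :=
  (forall i : nat, (x i <= d 0%nat)%nat) /\
  (forall k : nat, alt_le d (shift x k)).

Definition factor_of (w : list nat) (x : iword) : Prop :=
  exists k : nat, w = map (fun i => x (k + i)%nat) (seq 0 (length w)).

Definition M_factor (d : iword) (w : list nat) : Prop :=
  exists x : iword, in_M d x /\ factor_of w x.

Definition factor_count (d : iword) (n c : nat) : Prop :=
  exists L : list (list nat), NoDup L /\ length L = c /\
    (forall w : list nat, In w L <-> (length w = n /\ M_factor d w)).

Definition has_entropy (d : iword) (h : R) : Prop :=
  exists H : nat -> nat, (forall n : nat, factor_count d n (H n)) /\
    Un_cv (fun n : nat => ln (INR (H n)) / INR n) h.

Definition phi_letter (a : nat) : list nat :=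
  match a with 0%nat => [1%nat] | _ => [1%nat; 0%nat; 0%nat] end.

Definition phi (w : list nat) : list nat := flat_map phi_letter w.

Definition u (n : nat) : list nat := Nat.iter n phi [1%nat].

Definition v (n : nat) : list nat :=
  match n with 0%nat => [0%nat; 0%nat] | S m => u m ++ u m end.

(* the infinite word p (s s s ...) for finite words p, s (s nonempty) *)
Definition prefix_periodic (p s : list nat) : iword :=
  fun i => if (i <? length p)%nat then nth i p 0%nat
           else nth ((i - length p) mod length s) s 0%nat.

Definition d_n (n : nat) : iword := prefix_periodic (u n) (v n).

(* phi^infty(1): u_n is a prefix of u_{n+1} and |u_{i+1}| > i,
   so the i-th letter of the limit is the i-th letter of u_{i+1} *)
Definition phi_inf : iword := fun i => nth i (u (S i)) 0%nat.

(* The substitution [phi : 0 -> 1, 1 -> 100] extends to a map [Phi] on infinite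
   binary words; since both images have odd length, [Phi] is strictly increasing
   for the alternate order.  Hence [Phi] maps [M e] into [M (Phi e)], and
   conversely every word of [M (Phi e)] is [0^oo] or [0^m Phi y] with [y] in [M e].
   Moreover [d_n (S n) = Phi (d_n n)] and [Phi phi_inf = phi_inf].

   (1) [d_n 0 = 1 0^oo], and every binary word whose letters come in aligned
   pairs lies in [M (d_n 0)].  Pushing [2^t] such words built from balanced blocks
   through [Phi^n] gives [2^t] factors of [M (d_n n)] of length [t K], so the
   entropy is at least [ln 2 / K].

   (2) Applying the converse twice, a word of [M phi_inf] is [0^oo], [0^m 1^oo] or
   [0^a 1^b Phi (Phi z)] with [z] in [M phi_inf].  Since [Phi (Phi _)] at least
   triples lengths, [M phi_inf] has at most [O(N^2)] times as many factors of
   length [3 N] as of length [N + 2], which forces the entropy (which exists by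
   Fekete's lemma) to vanish. *)

From Stdlib Require Import Reals Lra Lia List Arith Classical ClassicalEpsilon
  FunctionalExtensionality FinFun.
Import ListNotations.

Open Scope nat_scope.

Definition binary (x : iword) : Prop := forall i, x i <= 1.

Definition binary_list (w : list nat) : Prop := forall a, In a w -> a <= 1.

Definition prepend (w : list nat) (x : iword) : iword :=
  fun i => if i <? length w then nth i w 0 else x (i - length w).

Lemma prepend_lt w x i : i < length w -> prepend w x i = nth i w 0.
Proof. intro H; unfold prepend; apply Nat.ltb_lt in H; now rewrite H. Qed.

Lemma prepend_ge w x i : length w <= i -> prepend w x i = x (i - length w).
Proof. intro H; unfold prepend; apply Nat.ltb_ge in H; now rewrite H. Qed.

Lemma prepend_app w1 w2 x : prepend w1 (prepend w2 x) = prepend (w1 ++ w2) x.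
Proof.
  apply functional_extensionality; intro i.
  destruct (Nat.lt_ge_cases i (length w1)) as [H1|H1].
  - rewrite !prepend_lt, app_nth1; rewrite ?length_app; auto; lia.
  - rewrite (prepend_ge w1) by lia.
    destruct (Nat.lt_ge_cases i (length w1 + length w2)) as [H2|H2].
    + rewrite !prepend_lt, app_nth2; rewrite ?length_app; auto; lia.
    + rewrite !prepend_ge; rewrite ?length_app; [f_equal|..]; lia.
Qed.

Lemma shift_prepend w x : shift (prepend w x) (length w) = x.
Proof.
  apply functional_extensionality; intro i; unfold shift.
  rewrite prepend_ge by lia; f_equal; lia.
Qed.

Lemma shift_shift x a b : shift (shift x a) b = shift x (a + b).
Proof. apply functional_extensionality; intro i; unfold shift; f_equal; lia. Qed.

Lemma binary_shift x k : binary x -> binary (shift x k).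
Proof. intros H i; apply H. Qed.

Fixpoint slice (x : iword) (k n : nat) : list nat :=
  match n with 0 => [] | S n => x k :: slice x (S k) n end.

Lemma length_slice x k n : length (slice x k n) = n.
Proof. revert k; induction n; simpl; auto. Qed.

Lemma nth_slice x k n i : i < n -> nth i (slice x k n) 0 = x (k + i).
Proof.
  revert k i; induction n; intros k [|i] H; simpl; try lia; [f_equal; lia|].
  rewrite IHn by lia; f_equal; lia.
Qed.

Lemma slice_add x k m n : slice x k (m + n) = slice x k m ++ slice x (k + m) n.
Proof.
  revert k; induction m; intro k; simpl; [f_equal; lia|].
  rewrite IHm; do 3 f_equal; lia.
Qed.

Lemma slice_S x k n : slice x k (S n) = slice x k n ++ [x (k + n)].
Proof. rewrite <- Nat.add_1_r, slice_add; reflexivity. Qed.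

Lemma slice_shift x q k n : slice (shift x q) k n = slice x (q + k) n.
Proof. revert k; induction n; intro k; simpl; auto; rewrite IHn; do 2 f_equal; lia. Qed.

Lemma slice_const c k n : slice (fun _ => c) k n = repeat c n.
Proof. revert k; induction n; simpl; intros; f_equal; auto. Qed.

Lemma map_seq_slice x k n : map (fun i => x (k + i)) (seq 0 n) = slice x k n.
Proof.
  transitivity (slice x (k + 0) n); [|now rewrite Nat.add_0_r].
  generalize 0; induction n; intro s; simpl; auto; rewrite IHn; do 2 f_equal; lia.
Qed.

Lemma prepend_slice_shift x q : prepend (slice x 0 q) (shift x q) = x.
Proof.
  apply functional_extensionality; intro i.
  destruct (Nat.lt_ge_cases i q).
  - rewrite prepend_lt, nth_slice by (rewrite ?length_slice; auto); reflexivity.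
  - rewrite prepend_ge by (rewrite length_slice; auto).
    unfold shift; rewrite length_slice; f_equal; lia.
Qed.

Lemma slice_prepend_lt w x k n :
  k + n <= length w -> slice (prepend w x) k n = firstn n (skipn k w).
Proof.
  intro H; apply nth_ext with 0 0.
  - rewrite length_slice, length_firstn, length_skipn; lia.
  - intros i Hi; rewrite length_slice in Hi.
    rewrite nth_slice, nth_firstn, nth_skipn, prepend_lt by lia.
    replace (i <? n) with true by (symmetry; apply Nat.ltb_lt; lia); reflexivity.
Qed.

Lemma slice_prepend_ge w x k n :
  length w <= k -> slice (prepend w x) k n = slice x (k - length w) n.
Proof.
  revert k; induction n; intros k H; simpl; auto.
  rewrite prepend_ge, IHn by lia; do 2 f_equal; lia.
Qed.

Lemma slice_prepend_straddle w x k n : k <= length w <= k + n ->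
  slice (prepend w x) k n = skipn k w ++ slice x 0 (n - (length w - k)).
Proof.
  intro H; replace n with ((length w - k) + (n - (length w - k))) at 1 by lia.
  rewrite slice_add, slice_prepend_lt, slice_prepend_ge by lia.
  rewrite firstn_all2 by (rewrite length_skipn; lia); do 2 f_equal; lia.
Qed.

Lemma slice_prepend w x : slice (prepend w x) 0 (length w) = w.
Proof. rewrite slice_prepend_lt by lia; apply firstn_all. Qed.

(** * The substitution [phi] on infinite words *)

Lemma phi_app w1 w2 : phi (w1 ++ w2) = phi w1 ++ phi w2.
Proof. apply flat_map_app. Qed.

Lemma phi_cons a w : phi (a :: w) = phi_letter a ++ phi w.
Proof. reflexivity. Qed.

Lemma phi_single a : phi [a] = phi_letter a.
Proof. apply app_nil_r. Qed.

Lemma length_phi_letter a : length (phi_letter a) = if a =? 0 then 1 else 3.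
Proof. now destruct a. Qed.

Lemma odd_length_phi_letter a : Nat.odd (length (phi_letter a)) = true.
Proof. now destruct a. Qed.

Lemma length_phi_ge w : length w <= length (phi w).
Proof.
  induction w as [|a w IH]; simpl; auto.
  rewrite length_app, length_phi_letter; destruct (a =? 0); lia.
Qed.

Lemma phi_nonempty w : w <> [] -> phi w <> [].
Proof. destruct w as [|[] w]; simpl; congruence. Qed.

Lemma phi_binary w : binary_list (phi w).
Proof.
  intro a; induction w as [|b w IH]; simpl; [tauto|].
  rewrite in_app_iff; intros [H|H]; auto; destruct b; simpl in H; lia.
Qed.

(* [phi] extended letterwise to infinite words: every prefix of length
   [i + 1] is already long enough to determine the letter at [i]. *)
Definition Phi (y : iword) : iword := fun i => nth i (phi (slice y 0 (S i))) 0.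

Lemma nth_phi_slice y i m m' : i < m -> i < m' ->
  nth i (phi (slice y 0 m)) 0 = nth i (phi (slice y 0 m')) 0.
Proof.
  assert (Hle : forall m m', i < m -> m <= m' ->
    nth i (phi (slice y 0 m)) 0 = nth i (phi (slice y 0 m')) 0).
  { intros k k' H Hk; replace k' with (k + (k' - k)) by lia.
    pose proof (length_phi_ge (slice y 0 k)); rewrite length_slice in *.
    rewrite slice_add, phi_app, app_nth1; auto; lia. }
  intros H H'; destruct (Nat.le_ge_cases m m'); [|symmetry]; auto.
Qed.

Lemma Phi_prefix y q : Phi y = prepend (phi (slice y 0 q)) (Phi (shift y q)).
Proof.
  apply functional_extensionality; intro i; unfold Phi at 1.
  rewrite (nth_phi_slice y i (S i) (q + S i)) by lia.
  rewrite slice_add, phi_app.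
  replace (slice y (0 + q) (S i)) with (slice (shift y q) 0 (S i))
    by (rewrite slice_shift; f_equal; lia).
  destruct (Nat.lt_ge_cases i (length (phi (slice y 0 q)))).
  - rewrite app_nth1, prepend_lt; auto.
  - rewrite app_nth2, prepend_ge by auto; unfold Phi.
    apply nth_phi_slice; lia.
Qed.

Lemma Phi_prepend w x : Phi (prepend w x) = prepend (phi w) (Phi x).
Proof.
  rewrite (Phi_prefix _ (length w)), slice_prepend, shift_prepend; reflexivity.
Qed.

Lemma Phi_unfold y : Phi y = prepend (phi_letter (y 0)) (Phi (shift y 1)).
Proof. rewrite (Phi_prefix y 1) at 1; simpl slice; now rewrite phi_single. Qed.

Lemma Phi_0 y : Phi y 0 = 1.
Proof. unfold Phi; simpl; now destruct (y 0). Qed.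

Lemma Phi_binary y : binary (Phi y).
Proof.
  intro i; unfold Phi.
  destruct (nth_in_or_default i (phi (slice y 0 (S i))) 0) as [H|H].
  - eapply phi_binary; eauto.
  - rewrite H; lia.
Qed.

(** * The alternate order *)

Definition alt_lt_at (x y : iword) (j : nat) : Prop :=
  (forall i, i < j -> x i = y i) /\
  (if Nat.even j then y j < x j else x j < y j).

Lemma alt_lt_at_S x y j :
  alt_lt_at x y (S j) -> x 0 = y 0 /\ alt_lt_at (shift y 1) (shift x 1) j.
Proof.
  intros [Heq Hj]; split; [apply Heq; lia|split].
  - intros i Hi; symmetry; apply Heq; lia.
  - unfold shift; simpl; rewrite Nat.even_succ, <- Nat.negb_even in Hj.
    destruct (Nat.even j); auto.
Qed.

Lemma alt_lt_at_prepend_odd w x y j : Nat.odd (length w) = true ->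
  alt_lt_at x y j -> alt_lt_at (prepend w y) (prepend w x) (length w + j).
Proof.
  intros Hw [Heq Hj]; split.
  - intros i Hi; destruct (Nat.lt_ge_cases i (length w)).
    + rewrite !prepend_lt; auto.
    + rewrite !prepend_ge by lia; symmetry; apply Heq; lia.
  - rewrite !prepend_ge by lia; replace (length w + j - length w) with j by lia.
    rewrite Nat.even_add, <- (Nat.negb_odd (length w)), Hw.
    destruct (Nat.even j); auto.
Qed.

Lemma alt_lt_at_asym x y j j' : alt_lt_at x y j -> alt_lt_at y x j' -> False.
Proof.
  intros [H1 H2] [H1' H2'].
  destruct (Nat.lt_total j j') as [Hl|[<-|Hl]].
  - specialize (H1' j Hl); destruct (Nat.even j); lia.
  - destruct (Nat.even j); lia.
  - specialize (H1 j' Hl); destruct (Nat.even j'); lia.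
Qed.

Lemma exists_least (P : nat -> Prop) :
  (exists n, P n) -> exists n, P n /\ forall m, m < n -> ~ P m.
Proof.
  intros [n Hn]; induction n as [n IH] using lt_wf_ind.
  destruct (classic (exists m, m < n /\ P m)) as [[m [Hm Pm]]|Hno]; eauto.
  exists n; split; auto; intros m Hm Pm; eauto.
Qed.

Lemma alt_lt_total x y : x = y \/ alt_lt x y \/ alt_lt y x.
Proof.
  destruct (classic (exists i, x i <> y i)) as [Hd|Hn].
  - destruct (exists_least _ Hd) as [j [Hj Hl]]; right.
    assert (Hb : forall i, i < j -> x i = y i) by (intros i Hi; apply NNPP, Hl, Hi).
    assert (Hb' : forall i, i < j -> y i = x i) by (intros; symmetry; auto).
    destruct (Nat.lt_total (x j) (y j)) as [H|[H|H]]; [|contradiction|];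
      destruct (Nat.even j) eqn:E;
      solve [left; exists j; split; auto; rewrite E; auto
            |right; exists j; split; auto; rewrite E; auto].
  - left; apply functional_extensionality; intro i; apply NNPP; eauto.
Qed.

(* The images [1] and [100] of the two letters have odd length, so [Phi]
   preserves the alternate order, not only the lexicographic one. *)
Lemma Phi_alt_lt_at j : forall x y, binary x -> binary y ->
  alt_lt_at x y j -> alt_lt (Phi x) (Phi y).
Proof.
  induction j as [|j IH]; intros x y Bx By Hxy.
  - destruct Hxy as [_ H0]; simpl in H0.
    assert (x 0 = 1 /\ y 0 = 0) as [Hx Hy] by (pose proof (Bx 0); lia).
    exists 1; split.
    + intros i Hi; replace i with 0 by lia; now rewrite !Phi_0.
    + rewrite (Phi_unfold x), (Phi_unfold y), Hx, Hy.
      unfold prepend; simpl; rewrite Phi_0; lia.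
  - apply alt_lt_at_S in Hxy as [E Hxy].
    destruct (IH _ _ (binary_shift y 1 By) (binary_shift x 1 Bx) Hxy) as [j' Hj'].
    apply (alt_lt_at_prepend_odd (phi_letter (x 0))) in Hj';
      [|apply odd_length_phi_letter].
    exists (length (phi_letter (x 0)) + j').
    rewrite (Phi_unfold x), (Phi_unfold y), <- E; exact Hj'.
Qed.

Lemma Phi_alt_le x y : binary x -> binary y -> alt_le x y -> alt_le (Phi x) (Phi y).
Proof.
  intros Bx By [H|[j H]].
  - left; apply functional_extensionality in H; now subst.
  - right; eapply Phi_alt_lt_at; eauto.
Qed.

Lemma alt_le_of_Phi x y : binary x -> binary y -> alt_le (Phi x) (Phi y) -> alt_le x y.
Proof.
  intros Bx By H.
  destruct (alt_lt_total x y) as [->|[Hlt|[j Hj]]]; [left; auto|right; auto|].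
  exfalso; destruct (Phi_alt_lt_at j y x By Bx Hj) as [j' Hj'].
  destruct H as [E|[j'' H]].
  - apply functional_extensionality in E; rewrite E in Hj'.
    eapply alt_lt_at_asym; eauto.
  - eapply alt_lt_at_asym; eauto.
Qed.

(** * Alternate Lyndon systems and [Phi] *)

Lemma zero_in_M d : 0 < d 0 -> in_M d (fun _ => 0).
Proof.
  intro Hd; split; [intro; lia|].
  intro k; right; exists 0; split; [intros; lia|]; exact Hd.
Qed.

Lemma in_M_binary d x : d 0 = 1 -> in_M d x -> binary x.
Proof. intros Hd [Hx _] i; rewrite <- Hd; apply Hx. Qed.

Lemma exists_bracket (f : nat -> nat) : f 0 = 0 -> (forall q, f q < f (S q)) ->
  forall k, exists q, f q <= k < f (S q).
Proof.
  intros H0 Hf k; induction k as [|k [q Hq]].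
  - exists 0; rewrite H0; specialize (Hf 0); lia.
  - destruct (Nat.eq_dec (S k) (f (S q))) as [E|E].
    + exists (S q); specialize (Hf (S q)); lia.
    + exists q; lia.
Qed.

Lemma length_phi_slice_S y q :
  length (phi (slice y 0 (S q))) = length (phi (slice y 0 q)) + length (phi_letter (y q)).
Proof. now rewrite slice_S, phi_app, phi_single, length_app. Qed.

(* The block [phi (y q)] of [Phi y] starts at [length (phi (slice y 0 q))];
   the other letters of a block are [0]. *)
Lemma Phi_block_start y k :
  Phi y k = 0 \/ exists q, k = length (phi (slice y 0 q)).
Proof.
  destruct (exists_bracket (fun q => length (phi (slice y 0 q)))) with (k := k)
    as [q Hq]; [reflexivity| |].
  { intro q; rewrite length_phi_slice_S, length_phi_letter; destruct (y q =? 0); lia. }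
  rewrite length_phi_slice_S in Hq.
  destruct (Nat.eq_dec k (length (phi (slice y 0 q)))) as [E|E]; [right; eauto|left].
  rewrite (Phi_prefix y (S q)), prepend_lt by (rewrite length_phi_slice_S; lia).
  rewrite slice_S, phi_app, phi_single, app_nth2 by lia; simpl (0 + q).
  destruct (y q); simpl in *; [lia|].
  destruct (k - length (phi (slice y 0 q))) as [|[|[|]]] eqn:Hk; simpl; lia.
Qed.

Lemma shift_Phi_block y q :
  shift (Phi y) (length (phi (slice y 0 q))) = Phi (shift y q).
Proof. rewrite (Phi_prefix y q) at 1; apply shift_prepend. Qed.

Lemma in_M_Phi e y : binary e -> e 0 = 1 -> in_M e y -> in_M (Phi e) (Phi y).
Proof.
  intros Be He Hy; split; [intro; rewrite Phi_0; apply Phi_binary|].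
  intro k; destruct (Phi_block_start y k) as [H0|[q ->]].
  - right; exists 0; split; [intros; lia|]; simpl.
    unfold shift; rewrite Nat.add_0_r, H0, Phi_0; lia.
  - rewrite shift_Phi_block; apply Phi_alt_le; auto.
    + apply binary_shift; eapply in_M_binary; eauto.
    + apply Hy.
Qed.

(* Every [1] of [x] starts a block [1] or [100] that is followed by a [1]:
   a word of this shape beginning with [1] is cut into the blocks [phi 0 = 1]
   and [phi 1 = 100]. *)
Definition phi_coded (x : iword) : Prop := binary x /\
  forall k, x k = 1 -> x (k + 1) = 1 \/ (x (k + 1) = 0 /\ x (k + 2) = 0 /\ x (k + 3) = 1).

Lemma phi_coded_shift x q : phi_coded x -> phi_coded (shift x q).
Proof.
  intros [B H]; split; [apply binary_shift; auto|].
  intros k Hk; unfold shift in *; rewrite !Nat.add_assoc; auto.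
Qed.

Fixpoint unphi_at (q : nat) (x : iword) : nat :=
  match q with
  | 0 => if x 1 =? 1 then 0 else 1
  | S q => unphi_at q (shift x (if x 1 =? 1 then 1 else 3))
  end.

Definition unphi (x : iword) : iword := fun q => unphi_at q x.

Lemma unphi_binary x : binary (unphi x).
Proof.
  intro q; unfold unphi; revert x; induction q; intro x; simpl; auto.
  destruct (x 1 =? 1); lia.
Qed.

Lemma shift_unphi x :
  shift (unphi x) 1 = unphi (shift x (if x 1 =? 1 then 1 else 3)).
Proof. reflexivity. Qed.

Lemma Phi_unphi x : phi_coded x -> x 0 = 1 -> Phi (unphi x) = x.
Proof.
  intros Hx H0; apply functional_extensionality; intro i; revert x Hx H0.
  induction i as [i IH] using lt_wf_ind; intros x Hx H0.
  rewrite Phi_unfold, shift_unphi; unfold unphi at 1; simpl unphi_at.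
  destruct (x 1 =? 1) eqn:E1.
  - apply Nat.eqb_eq in E1; destruct i as [|i]; [auto|].
    rewrite prepend_ge by (simpl; lia); simpl.
    rewrite Nat.sub_0_r, (IH i) by (auto using phi_coded_shift; lia).
    unfold shift; f_equal; lia.
  - apply Nat.eqb_neq in E1.
    destruct (proj2 Hx 0 H0) as [|[H1 [H2 H3]]]; [contradiction|].
    destruct i as [|[|[|i]]]; auto.
    rewrite prepend_ge by (simpl; lia); simpl.
    rewrite Nat.sub_0_r, (IH i) by (auto using phi_coded_shift; lia).
    unfold shift; f_equal; lia.
Qed.

(* [Phi e] begins with [1001], so in a word of [M (Phi e)] a letter [1] is never
   followed by [01] or [000]. *)
Lemma in_M_Phi_coded e x : e 0 = 1 -> in_M (Phi e) x -> phi_coded x.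
Proof.
  intros He Hx; pose proof (in_M_binary _ _ (Phi_0 e) Hx) as Bx.
  split; auto; intros k Hk.
  assert (Hpref : Phi e 1 = 0 /\ Phi e 2 = 0 /\ Phi e 3 = 1)
    by (rewrite !(Phi_unfold e), He; unfold prepend; simpl; auto using Phi_0).
  destruct Hpref as [E1 [E2 E3]].
  pose proof (Bx (k + 1)); pose proof (Bx (k + 2)); pose proof (Bx (k + 3)).
  destruct (proj2 Hx k) as [Heq|[j [Hb Hj]]]; unfold shift in *.
  - right; rewrite <- !Heq; auto.
  - destruct j as [|[|[|[|j]]]]; simpl in Hj.
    + rewrite Phi_0, Nat.add_0_r in Hj; lia.
    + left; lia.
    + specialize (Hb 1 ltac:(lia)); lia.
    + specialize (Hb 1 ltac:(lia)); lia.
    + right; pose proof (Hb 1 ltac:(lia)); pose proof (Hb 2 ltac:(lia));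
        pose proof (Hb 3 ltac:(lia)); lia.
Qed.

Lemma in_M_Phi_inv e x : binary e -> e 0 = 1 -> in_M (Phi e) x ->
  x = (fun _ => 0) \/ exists m y, in_M e y /\ x = prepend (repeat 0 m) (Phi y).
Proof.
  intros Be He Hx; pose proof (in_M_binary _ _ (Phi_0 e) Hx) as Bx.
  destruct (classic (exists m, x m = 1)) as [Hm|Hn].
  2:{ left; apply functional_extensionality; intro i; pose proof (Bx i).
      destruct (Nat.eq_dec (x i) 1); [exfalso|]; eauto; lia. }
  right; destruct (exists_least _ Hm) as [m [Hm1 Hl]].
  set (y := unphi (shift x m)); exists m, y.
  assert (Ey : Phi y = shift x m).
  { apply Phi_unphi; [apply phi_coded_shift; eapply in_M_Phi_coded; eauto|].
    unfold shift; now rewrite Nat.add_0_r. }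
  assert (Hpre : slice x 0 m = repeat 0 m).
  { apply nth_ext with 0 0; rewrite ?length_slice, ?repeat_length; auto.
    intros i Hi; rewrite nth_slice, nth_repeat by auto.
    simpl; pose proof (Hl i Hi); pose proof (Bx i); lia. }
  assert (Ex : x = prepend (repeat 0 m) (Phi y))
    by (rewrite Ey, <- Hpre; symmetry; apply prepend_slice_shift).
  split; auto; split; [intro; rewrite He; apply unphi_binary|].
  intro q; apply alt_le_of_Phi; [auto|apply binary_shift, unphi_binary|].
  rewrite <- shift_Phi_block, Ey, shift_shift; apply Hx.
Qed.

Definition periodic (s : list nat) : iword := fun i => nth (i mod length s) s 0.

Lemma prefix_periodic_prepend p s : prefix_periodic p s = prepend p (periodic s).
Proof. reflexivity. Qed.

Lemma periodic_unfold s : s <> [] -> periodic s = prepend s (periodic s).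
Proof.
  intro Hs; assert (length s <> 0) by (destruct s; simpl; congruence).
  apply functional_extensionality; intro i.
  destruct (Nat.lt_ge_cases i (length s)).
  - rewrite prepend_lt by auto; unfold periodic; now rewrite Nat.mod_small.
  - rewrite prepend_ge by auto; unfold periodic.
    replace i with (i - length s + 1 * length s) at 1 by lia.
    now rewrite Nat.Div0.mod_add.
Qed.

Lemma prepend_fixpoint_unique w x y : w <> [] ->
  x = prepend w x -> y = prepend w y -> x = y.
Proof.
  intros Hw Hx Hy; apply functional_extensionality; intro i.
  induction i as [i IH] using lt_wf_ind.
  rewrite Hx, Hy; destruct (Nat.lt_ge_cases i (length w)).
  - now rewrite !prepend_lt.
  - rewrite !prepend_ge by auto; apply IH; destruct w; simpl in *; [congruence|lia].
Qed.

Lemma Phi_periodic s : s <> [] -> Phi (periodic s) = periodic (phi s).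
Proof.
  intro Hs; apply (prepend_fixpoint_unique (phi s)); auto using phi_nonempty.
  - rewrite (periodic_unfold s) at 1 by auto; apply Phi_prepend.
  - apply periodic_unfold, phi_nonempty, Hs.
Qed.

Lemma u_S n : u (S n) = phi (u n).
Proof. reflexivity. Qed.

Lemma v_S n : v (S n) = phi (v n).
Proof.
  destruct n; [reflexivity|].
  change (u (S n) ++ u (S n) = phi (u n ++ u n)); now rewrite phi_app.
Qed.

Lemma v_nonempty n : v n <> [].
Proof. induction n; [discriminate|]; rewrite v_S; now apply phi_nonempty. Qed.

Lemma d_n_S n : d_n (S n) = Phi (d_n n).
Proof.
  unfold d_n; rewrite !prefix_periodic_prepend, Phi_prepend, Phi_periodic
    by apply v_nonempty.
  now rewrite u_S, v_S.
Qed.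

Lemma d_n_0 : d_n 0 = fun i => if i =? 0 then 1 else 0.
Proof.
  apply functional_extensionality; intros [|i]; [reflexivity|].
  unfold d_n, prefix_periodic; cbn -[Nat.modulo].
  destruct ((i - 0) mod 2) as [|[|[|]]]; reflexivity.
Qed.

Lemma d_n_first n : d_n n 0 = 1.
Proof. destruct n; [reflexivity|]; rewrite d_n_S; apply Phi_0. Qed.

Lemma d_n_binary n : binary (d_n n).
Proof.
  destruct n; [|rewrite d_n_S; apply Phi_binary].
  intro i; rewrite d_n_0; destruct (i =? 0); lia.
Qed.

Lemma u_app n : exists t, u (S n) = u n ++ t.
Proof.
  induction n as [|n [t Ht]]; [now exists [0; 0]|].
  exists (phi t); rewrite (u_S (S n)), Ht at 1; rewrite phi_app; reflexivity.
Qed.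

Lemma u_prefix n m : n <= m -> exists t, u m = u n ++ t.
Proof.
  induction 1 as [|m _ [t Ht]]; [exists []; now rewrite app_nil_r|].
  destruct (u_app m) as [t' Ht']; exists (t ++ t').
  now rewrite Ht', Ht, app_assoc.
Qed.

Lemma u_head n : exists t, u n = 1 :: t.
Proof.
  induction n as [|n [t Ht]]; [now exists []|].
  exists ([0; 0] ++ phi t); now rewrite u_S, Ht.
Qed.

Lemma length_u n : n < length (u n).
Proof.
  induction n as [|n IH]; [simpl; lia|].
  destruct (u_head n) as [t Ht]; pose proof (length_phi_ge t).
  rewrite u_S, Ht, phi_cons, length_app; rewrite Ht in IH; simpl in *; lia.
Qed.

Lemma phi_inf_nth_u n i : i < length (u n) -> phi_inf i = nth i (u n) 0.
Proof.
  intro H; unfold phi_inf; pose proof (length_u (S i)).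
  destruct (Nat.le_ge_cases n (S i)) as [Hn|Hn];
    destruct (u_prefix _ _ Hn) as [t ->]; rewrite app_nth1; auto; lia.
Qed.

Lemma Phi_phi_inf : Phi phi_inf = phi_inf.
Proof.
  apply functional_extensionality; intro i.
  assert (Hu : slice phi_inf 0 (length (u (S i))) = u (S i)).
  { apply nth_ext with 0 0; rewrite length_slice; auto.
    intros j Hj; rewrite nth_slice by auto; now apply phi_inf_nth_u. }
  rewrite (Phi_prefix phi_inf (length (u (S i)))), Hu, <- u_S.
  pose proof (length_u (S i)); destruct (u_app (S i)) as [t Ht].
  assert (i < length (u (S (S i)))) by (rewrite Ht, length_app; lia).
  rewrite prepend_lt by auto; symmetry; now apply phi_inf_nth_u.
Qed.

Lemma phi_inf_first : phi_inf 0 = 1.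
Proof. reflexivity. Qed.

Lemma phi_inf_binary : binary phi_inf.
Proof. rewrite <- Phi_phi_inf; apply Phi_binary. Qed.

(** * Counting factors *)

Fixpoint words (b n : nat) : list (list nat) :=
  match n with
  | 0 => [[]]
  | S n => flat_map (fun a => map (cons a) (words b n)) (seq 0 (S b))
  end.

Lemma in_words b n w :
  In w (words b n) <-> length w = n /\ forall a, In a w -> a <= b.
Proof.
  revert w; induction n as [|n IH]; intro w; cbn [words].
  - simpl; split; [intros [<-|[]]; split; simpl; tauto|].
    intros [Hl _]; destruct w; simpl in *; auto; lia.
  - rewrite in_flat_map; split.
    + intros [a [Ha Hw]]; apply in_map_iff in Hw as [w' [<- Hw']].
      apply IH in Hw' as [Hl Hb]; apply in_seq in Ha; simpl.
      split; [lia|intros c [<-|Hc]; [lia|auto]].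
    + intros [Hl Hb]; destruct w as [|a w]; simpl in Hl; [lia|].
      exists a; split; [apply in_seq; specialize (Hb a (or_introl eq_refl)); lia|].
      apply in_map, IH; split; [lia|intros c Hc; apply Hb; now right].
Qed.

Lemma NoDup_words b n : NoDup (words b n).
Proof.
  induction n as [|n IH]; cbn [words]; [repeat constructor; auto|].
  generalize (seq_NoDup (S b) 0); generalize (seq 0 (S b)).
  intro l; induction l as [|a l IHl]; cbn [flat_map]; intro Hl; [constructor|].
  inversion Hl; subst; apply NoDup_app; auto.
  - apply Injective_map_NoDup; auto; intros w w' E; now injection E.
  - intros w Hw Hw'; apply in_map_iff in Hw as [w1 [<- _]].
    apply in_flat_map in Hw' as [a' [Ha' Hw']].
    apply in_map_iff in Hw' as [w2 [E _]]; injection E as ->; auto.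
Qed.

Lemma length_words b n : length (words b n) = S b ^ n.
Proof.
  induction n as [|n IH]; cbn [words]; auto.
  rewrite (flat_map_constant_length (c := S b ^ n)), length_seq; [simpl; lia|].
  intros; now rewrite length_map.
Qed.

Lemma M_factor_slice d x k n : in_M d x -> M_factor d (slice x k n).
Proof.
  intro Hx; exists x; split; auto; exists k.
  now rewrite length_slice, map_seq_slice.
Qed.

Lemma M_factor_inv d w :
  M_factor d w -> exists x k, in_M d x /\ w = slice x k (length w).
Proof.
  intros [x [Hx [k Hk]]]; exists x, k; split; auto.
  rewrite Hk at 1; apply map_seq_slice.
Qed.

Lemma exists_NoDup_filter {A : Type} (P : A -> Prop) (l : list A) :
  exists l', NoDup l' /\ forall a, In a l' <-> In a l /\ P a.
Proof.
  induction l as [|a l [l' [HN Hl']]]; [exists []; split; [constructor|simpl; tauto]|].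
  destruct (classic (P a /\ ~ In a l')) as [[Pa Na]|Hn].
  - exists (a :: l'); split; [now constructor|].
    intro b; simpl; rewrite Hl'; split; [intros [<-|]|intros [[<-|] ]]; tauto.
  - exists l'; split; auto; intro b; simpl; rewrite Hl'; split; [tauto|].
    intros [[<-|Hb] Pb]; [|tauto].
    destruct (classic (In a l')) as [Hin|Hin]; [apply Hl' in Hin; tauto|].
    exfalso; apply Hn; auto.
Qed.

Lemma factor_count_exists d n : exists c, factor_count d n c.
Proof.
  destruct (exists_NoDup_filter (fun w => M_factor d w) (words (d 0) n))
    as [l [HN Hl]].
  exists (length l), l; split; [auto|split; [reflexivity|]].
  intro w; rewrite Hl, in_words; split; [tauto|intros [Hn Hw]; repeat split; auto].
  destruct (M_factor_inv _ _ Hw) as [x [k [[Hx _] ->]]].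
  intros a Ha; apply In_nth with (d := 0) in Ha as [j [Hj <-]].
  rewrite length_slice in Hj; rewrite nth_slice by auto; apply Hx.
Qed.

Lemma factor_count_le d n c l : factor_count d n c ->
  (forall w, length w = n -> M_factor d w -> In w l) -> c <= length l.
Proof.
  intros [L [HN [<- HL]]] H; apply NoDup_incl_length; auto.
  intros w Hw; apply HL in Hw; apply H; tauto.
Qed.

Lemma factor_count_ge d n c l : factor_count d n c -> NoDup l ->
  (forall w, In w l -> length w = n /\ M_factor d w) -> length l <= c.
Proof.
  intros [L [HN [<- HL]]] Hl H; apply NoDup_incl_length; auto.
  intros w Hw; now apply HL, H.
Qed.

Lemma factor_count_mul d m n a b c : factor_count d m a -> factor_count d n b ->
  factor_count d (m + n) c -> c <= a * b.
Proof.
  intros [A [_ [<- HA]]] [B [_ [<- HB]]] Hc.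
  rewrite <- length_prod, <- (length_map (fun p => fst p ++ snd p)).
  apply (factor_count_le _ _ _ _ Hc); intros w Hl Hw.
  destruct (M_factor_inv _ _ Hw) as [x [k [Hx ->]]].
  rewrite Hl, slice_add; apply in_map_iff.
  exists (slice x k m, slice x (k + m) n); split; auto.
  apply in_prod; [apply HA|apply HB]; rewrite length_slice; auto using M_factor_slice.
Qed.

Lemma factor_count_pos d n c : 0 < d 0 -> factor_count d n c -> 1 <= c.
Proof.
  intros Hd Hc; change 1 with (length [slice (fun _ => 0) 0 n]).
  apply (factor_count_ge _ _ _ _ Hc); [repeat constructor; auto|].
  intros w [<-|[]]; rewrite length_slice; auto using M_factor_slice, zero_in_M.
Qed.

(** * Fekete's lemma and existence of the entropy *)

Open Scope R_scope.

Lemma subadditive_mul (a : nat -> R) : (forall m n, a (m + n)%nat <= a m + a n) ->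
  forall q m r, a (q * m + r)%nat <= INR q * a m + a r.
Proof.
  intros Hsub q m r; induction q as [|q IH]; [simpl; lra|].
  replace (S q * m + r)%nat with (m + (q * m + r))%nat by lia.
  rewrite S_INR; specialize (Hsub m (q * m + r)%nat); lra.
Qed.

Lemma bounded_initial_segment (a : nat -> R) m :
  exists C, 0 <= C /\ forall r, (r < m)%nat -> a r <= C.
Proof.
  induction m as [|m [C [HC Hr]]]; [exists 0; split; [lra|intros; lia]|].
  exists (Rmax C (a m)); split; [apply (Rle_trans _ C); auto using Rmax_l|].
  intros r Hrm; destruct (Nat.eq_dec r m) as [->|]; [apply Rmax_r|].
  apply (Rle_trans _ C); [apply Hr; lia|apply Rmax_l].
Qed.

Section Fekete.

Variable a : nat -> R.
Hypothesis a_nonneg : forall n, 0 <= a n.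
Hypothesis a_subadditive : forall m n, a (m + n)%nat <= a m + a n.

(* Write [n = q m + r] with [r < m]: then [a n <= (n / m) a m + max_(r<m) a r]. *)
Lemma subadditive_eventually_lt m eps : (1 <= m)%nat -> 0 < eps ->
  exists N, forall n, (N <= n)%nat -> a n / INR n < a m / INR m + eps.
Proof.
  intros Hm He; destruct (bounded_initial_segment a m) as [C [HC HCr]].
  destruct (INR_archimed eps C He) as [N HN]; exists (S N); intros n Hn.
  assert (Hm0 : 0 < INR m) by (apply lt_0_INR; lia).
  assert (Hn0 : 0 < INR n) by (apply lt_0_INR; lia).
  assert (HNn : INR N <= INR n) by (apply le_INR; lia).
  set (q := (n / m)%nat); set (r := (n mod m)%nat).
  assert (Hqr : n = (q * m + r)%nat) by (unfold q, r; rewrite Nat.mul_comm; apply Nat.div_mod; lia).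
  assert (Hqm : INR q * INR m <= INR n)
    by (rewrite <- mult_INR; apply le_INR; lia).
  assert (Han : a n <= INR q * a m + C).
  { rewrite Hqr at 1; pose proof (subadditive_mul a a_subadditive q m r).
    pose proof (HCr r (Nat.mod_upper_bound n m ltac:(lia))); lra. }
  assert (HqmR : INR q * a m <= INR n * (a m / INR m)).
  { replace (INR q * a m) with (INR q * INR m * (a m / INR m)) by (field; lra).
    apply Rmult_le_compat_r; auto; apply Rle_mult_inv_pos; auto. }
  apply (Rmult_lt_reg_r (INR n)); auto.
  unfold Rdiv at 1; rewrite Rmult_assoc, Rinv_l, Rmult_1_r by lra; nra.
Qed.

Lemma fekete : exists L, Un_cv (fun n => a n / INR n) L.
Proof.
  set (E := fun r => exists n, (1 <= n)%nat /\ r = - (a n / INR n)).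
  assert (HE : forall n, (1 <= n)%nat -> 0 <= a n / INR n)
    by (intros n Hn; apply Rle_mult_inv_pos; auto; apply lt_0_INR; lia).
  destruct (completeness E) as [M [HM1 HM2]].
  - exists 0; intros r [n [Hn ->]]; specialize (HE n Hn); lra.
  - exists (- (a 1%nat / INR 1)), 1%nat; auto.
  - exists (- M).
    assert (Hlow : forall n, (1 <= n)%nat -> - M <= a n / INR n).
    { intros n Hn; assert (- (a n / INR n) <= M) by (apply HM1; exists n; auto); lra. }
    assert (Hinf : forall eps, 0 < eps ->
      exists m, (1 <= m)%nat /\ a m / INR m < - M + eps).
    { intros eps He; apply NNPP; intro Hn.
      enough (M <= M - eps) by lra; apply HM2; intros r [n [Hn' ->]].
      destruct (Rlt_le_dec (a n / INR n) (- M + eps)); [|lra].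
      exfalso; eauto. }
    intros eps He; destruct (Hinf (eps / 2)) as [m [Hm Ham]]; [lra|].
    destruct (subadditive_eventually_lt m (eps / 2) Hm) as [N HN]; [lra|].
    exists (S N); intros n Hn; specialize (HN n ltac:(lia)).
    specialize (Hlow n ltac:(lia)); unfold R_dist; apply Rabs_def1; lra.
Qed.

End Fekete.

Lemma ln_le x y : 0 < x -> x <= y -> ln x <= ln y.
Proof. intros Hx [H|<-]; [left; apply ln_increasing|]; auto; lra. Qed.

Lemma ln_le_sub_1 x : 0 < x -> ln x <= x - 1.
Proof. intro H; pose proof (exp_ineq1_le (ln x)); rewrite exp_ln in *; auto; lra. Qed.

Definition log_ratio (H : nat -> nat) (n : nat) : R := ln (INR (H n)) / INR n.

Lemma entropy_exists d : (0 < d 0)%nat -> exists h, has_entropy d h.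
Proof.
  intro Hd; destruct (choice _ (factor_count_exists d)) as [H HH].
  assert (H1 : forall n, 1 <= INR (H n))
    by (intro n; apply (le_INR 1); eapply factor_count_pos; eauto).
  destruct (fekete (fun n => ln (INR (H n)))) as [h Hh].
  - intro n; rewrite <- ln_1; apply ln_le; [lra|auto].
  - intros m n; pose proof (H1 m); pose proof (H1 n); pose proof (H1 (m + n)%nat).
    rewrite <- ln_mult by lra; apply ln_le; [lra|].
    rewrite <- mult_INR; apply le_INR; eapply factor_count_mul; eauto.
  - exists h, H; auto.
Qed.

Lemma Un_cv_const c : Un_cv (fun _ => c) c.
Proof.
  intros eps He; exists 0%nat; intros; unfold R_dist.
  now rewrite Rminus_diag, Rabs_R0.
Qed.

Lemma Un_cv_subseq (u : nat -> R) (f : nat -> nat) L :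
  (forall n, (n <= f n)%nat) -> Un_cv u L -> Un_cv (fun n => u (f n)) L.
Proof.
  intros Hf Hu eps He; destruct (Hu eps He) as [N HN]; exists N; intros n Hn.
  apply HN; specialize (Hf n); lia.
Qed.

Lemma log_ratio_lim_ge (H : nat -> nat) h K : (1 <= K)%nat ->
  (forall t, (2 ^ t <= H (t * K))%nat) -> Un_cv (log_ratio H) h -> ln 2 / INR K <= h.
Proof.
  intros HK Hpow Hh.
  apply (Rle_cv_lim (Un := fun _ => ln 2 / INR K)
    (Vn := fun t => log_ratio H (S t * K))); [|apply Un_cv_const|].
  2:{ apply (Un_cv_subseq (log_ratio H) (fun t => S t * K)%nat); [intro; nia|auto]. }
  intro t; pose proof ln_lt_2; unfold log_ratio.
  assert (HtK : 0 < INR (S t * K)) by (apply lt_0_INR; nia).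
  assert (Hln : INR (S t) * ln 2 <= ln (INR (H (S t * K)%nat))).
  { rewrite <- ln_pow by lra; apply ln_le; [apply pow_lt; lra|].
    replace 2 with (INR 2) by reflexivity; rewrite <- pow_INR; apply le_INR, Hpow. }
  replace (ln 2 / INR K) with (INR (S t) * ln 2 / INR (S t * K))
    by (rewrite mult_INR in *; field; split; apply not_0_INR; lia).
  unfold Rdiv; apply Rmult_le_compat_r; auto; left; apply Rinv_0_lt_compat; auto.
Qed.

(* Along [N = (M + 1)^2] a polynomial factor in [N] only costs [O(M) = o(N)]. *)
Lemma ln_square_bound c M : (1 <= c)%nat ->
  ln (INR (c * ((S M * S M) + 1) ^ 2)) <= (ln (INR c) + 4) * INR (S M).
Proof.
  intro Hc; assert (Hc' : 1 <= INR c) by (apply (le_INR 1); auto).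
  assert (HM : 1 <= INR (S M)) by (apply (le_INR 1); lia).
  rewrite mult_INR, pow_INR, ln_mult, ln_pow by (try apply pow_lt; try apply lt_0_INR; lia).
  assert (ln (INR (S M * S M + 1)) <= 2 * INR (S M)).
  { apply Rle_trans with (ln (INR (S (S M)) ^ 2)).
    - apply ln_le; [apply lt_0_INR; lia|]; rewrite <- pow_INR; apply le_INR.
      rewrite Nat.pow_2_r; nia.
    - rewrite ln_pow by (apply lt_0_INR; lia); pose proof (ln_le_sub_1 (INR (S (S M)))).
      rewrite (S_INR (S M)) in *; simpl INR at 1; lra. }
  pose proof (ln_le_sub_1 _ (Rlt_le_trans _ _ _ Rlt_0_1 Hc')).
  assert (0 <= ln (INR c)) by (rewrite <- ln_1; apply ln_le; lra).
  replace (INR 2) with 2 by reflexivity; nra.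
Qed.

Section Tripling.

Variables (H : nat -> nat) (c : nat).
Hypothesis H_pos : forall n, (1 <= H n)%nat.
Hypothesis H_tripling : forall N, (H (3 * N) <= c * (N + 1) ^ 2 * H N)%nat.

Lemma log_ratio_tripling M : let N := (S M * S M)%nat in
  3 * log_ratio H (3 * N) - log_ratio H N <= (ln (INR c) + 4) * RinvN M.
Proof.
  intro N; simpl pos; unfold log_ratio.
  assert (Hc : (1 <= c)%nat) by (specialize (H_tripling 0); specialize (H_pos 0); simpl in *; nia).
  assert (Hln : ln (INR (H (3 * N)%nat)) <= ln (INR (c * (N + 1) ^ 2)) + ln (INR (H N))).
  { assert (0 < INR (c * (N + 1) ^ 2)) by (apply lt_0_INR; rewrite Nat.pow_2_r; nia).
    assert (0 < INR (H N)) by (apply lt_0_INR, H_pos).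
    rewrite <- ln_mult by auto; apply ln_le; [apply lt_0_INR, H_pos|].
    rewrite <- mult_INR; apply le_INR, H_tripling. }
  pose proof (ln_square_bound c M Hc) as Hsq; fold N in Hsq.
  rewrite (mult_INR 3 N), <- S_INR.
  set (X := INR (S M)) in *; assert (HX : 0 < X) by (apply lt_0_INR; lia).
  assert (EN : INR N = X * X) by apply mult_INR; rewrite EN.
  replace (3 * (ln (INR (H (3 * N)%nat)) / (INR 3 * (X * X))) - ln (INR (H N)) / (X * X))
    with ((ln (INR (H (3 * N)%nat)) - ln (INR (H N))) / (X * X)) by (simpl INR; field; lra).
  replace ((ln (INR c) + 4) * / X) with ((ln (INR c) + 4) * X / (X * X)) by (field; lra).
  unfold Rdiv; apply Rmult_le_compat_r; [left; apply Rinv_0_lt_compat; nra|lra].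
Qed.

Lemma entropy_zero_of_tripling h : Un_cv (log_ratio H) h -> h = 0.
Proof.
  intro Hh.
  assert (Hh0 : 0 <= h).
  { apply (Rle_cv_lim (Un := fun _ => 0) (Vn := fun n => log_ratio H (S n)));
      [|apply Un_cv_const|apply Un_cv_subseq; auto].
    intro n; apply Rle_mult_inv_pos; [|apply lt_0_INR; lia].
    rewrite <- ln_1; apply ln_le; [lra|apply (le_INR 1), H_pos]. }
  assert (3 * h - h <= (ln (INR c) + 4) * 0); [|lra].
  apply (Rle_cv_lim log_ratio_tripling).
  - apply CV_minus; [apply (CV_mult (fun _ => 3) _ 3 h); [apply Un_cv_const|]|];
      apply (Un_cv_subseq (log_ratio H)); auto; intro; nia.
  - apply CV_mult; [apply Un_cv_const|apply RinvN_cv].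
Qed.

End Tripling.

Open Scope nat_scope.

(** * Exponentially many factors of [M (d_n n)] *)

(* In a word whose letters come in aligned pairs, two consecutive [1]s are at
   odd distance; this is what a suffix must satisfy to dominate [d_n 0 = 1000...]. *)
Lemma paired_gap_odd x k j : (forall i, x (2 * i) = x (2 * i + 1)) ->
  x k = 1 -> x (k + S j) = 1 -> (forall i, 1 <= i <= j -> x (k + i) = 0) ->
  Nat.even (S j) = false.
Proof.
  intros Hx Hk Hj Hgap; destruct (Nat.even (S j)) eqn:E; auto; exfalso.
  apply Nat.even_spec in E as [h Hh].
  destruct (Nat.Even_or_Odd k) as [[g ->]|[g ->]].
  - specialize (Hgap 1 ltac:(lia)); rewrite <- Hx, Hk in Hgap; discriminate.
  - specialize (Hgap j ltac:(lia)); replace (2 * g + 1 + j) with (2 * (g + h)) in Hgap by lia.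
    rewrite Hx in Hgap; replace (2 * (g + h) + 1) with (2 * g + 1 + S j) in Hgap by lia.
    congruence.
Qed.

Lemma in_M_d_n_0_of_paired x : binary x ->
  (forall i, x (2 * i) = x (2 * i + 1)) -> in_M (d_n 0) x.
Proof.
  intros Bx Hx; rewrite d_n_0; split; [intro; apply Bx|]; intro k.
  destruct (Nat.eq_dec (x k) 1) as [Hk|Hk].
  2:{ right; exists 0; split; [intros; lia|]; simpl; unfold shift.
      rewrite Nat.add_0_r; specialize (Bx k); lia. }
  destruct (classic (exists j, x (k + S j) = 1)) as [Hj|Hn].
  - destruct (exists_least _ Hj) as [j [Hj1 Hl]].
    assert (Hgap : forall i, 1 <= i <= j -> x (k + i) = 0).
    { intros [|i] Hi; [lia|]; pose proof (Hl i ltac:(lia)); pose proof (Bx (k + S i)); lia. }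
    right; exists (S j); split.
    + intros [|i] Hi; unfold shift; simpl; [now rewrite Nat.add_0_r|].
      symmetry; apply Hgap; lia.
    + rewrite (paired_gap_odd x k j); auto; unfold shift; simpl; lia.
  - left; intros [|i]; unfold shift; simpl; [now rewrite Nat.add_0_r|].
    pose proof (Bx (k + S i)); destruct (Nat.eq_dec (x (k + S i)) 1); [exfalso|]; eauto; lia.
Qed.

Lemma iter_Phi_prepend n w x :
  Nat.iter n Phi (prepend w x) = prepend (Nat.iter n phi w) (Nat.iter n Phi x).
Proof. induction n; simpl; [auto|]; now rewrite IHn, Phi_prepend. Qed.

Lemma iter_phi_app n w1 w2 :
  Nat.iter n phi (w1 ++ w2) = Nat.iter n phi w1 ++ Nat.iter n phi w2.
Proof. induction n; simpl; [auto|]; now rewrite IHn, phi_app. Qed.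

Lemma iter_phi_nil n : Nat.iter n phi [] = [].
Proof. induction n as [|n IH]; simpl; [|rewrite IH]; reflexivity. Qed.

Lemma iter_phi_nonempty n w : w <> [] -> Nat.iter n phi w <> [].
Proof. intro Hw; induction n; simpl; auto using phi_nonempty. Qed.

Lemma iter_Phi_in_M n x : in_M (d_n 0) x -> in_M (d_n n) (Nat.iter n Phi x).
Proof.
  intro Hx; induction n; simpl; auto; rewrite d_n_S.
  apply in_M_Phi; auto using d_n_binary, d_n_first.
Qed.

Fixpoint twice (w : list nat) : list nat :=
  match w with [] => [] | a :: w => a :: a :: twice w end.

Lemma twice_app w1 w2 : twice (w1 ++ w2) = twice w1 ++ twice w2.
Proof. induction w1 as [|a w1 IH]; simpl; [auto|now rewrite IH]. Qed.

Lemma twice_inj w w' : twice w = twice w' -> w = w'.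
Proof.
  revert w'; induction w; intros [|b w'] E; simpl in E; try discriminate; auto.
  injection E as -> E; f_equal; auto.
Qed.

Lemma slice_halves (z : iword) k n :
  slice (fun i => z (i / 2)) (2 * k) (2 * n) = twice (slice z k n).
Proof.
  revert k; induction n; intro k; [reflexivity|].
  replace (2 * S n) with (S (S (2 * n))) by lia; cbn [slice twice].
  replace (2 * k / 2) with k by (rewrite Nat.mul_comm, Nat.div_mul; lia).
  replace (S (2 * k) / 2) with k by (apply (Nat.div_unique _ _ _ 1); lia).
  replace (S (S (2 * k))) with (2 * S k) by lia; now rewrite IHn.
Qed.

(* Balanced blocks make the length of the image under [phi^n] depend only on
   [length s]. *)
Definition balanced (a : nat) : list nat := if a =? 0 then [0; 1] else [1; 0].

Definition balanced_code (s : list nat) : list nat := flat_map balanced s.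

Lemma balanced_code_inj s s' : binary_list s -> binary_list s' ->
  balanced_code s = balanced_code s' -> s = s'.
Proof.
  revert s'; induction s as [|a s IH]; intros [|b s'] Hs Hs' E; auto;
    unfold balanced_code in E; simpl in E; unfold balanced in E.
  - destruct (b =? 0); discriminate.
  - destruct (a =? 0); discriminate.
  - assert (a <= 1) by (apply Hs; now left); assert (b <= 1) by (apply Hs'; now left).
    destruct a as [|[|]], b as [|[|]]; try lia; simpl in E; injection E; intros; try lia;
      f_equal; apply IH; try assumption; intros c Hc; [apply Hs|apply Hs'|apply Hs|apply Hs'];
      now right.
Qed.

Lemma phi_inj w w' : binary_list w -> binary_list w' -> phi w = phi w' -> w = w'.
Proof.
  revert w'; induction w as [|a w IH]; intros [|b w'] Hw Hw' E; auto;
    rewrite ?phi_cons in E.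
  - destruct b; discriminate.
  - destruct a; discriminate.
  - assert (a <= 1) by (apply Hw; now left); assert (b <= 1) by (apply Hw'; now left).
    assert (binary_list w) by (intros c Hc; apply Hw; now right).
    assert (binary_list w') by (intros c Hc; apply Hw'; now right).
    destruct a as [|[|]], b as [|[|]]; try lia; simpl in E; injection E; intros.
    + f_equal; auto.
    + destruct w as [|[] w]; discriminate.
    + destruct w' as [|[] w']; discriminate.
    + f_equal; auto.
Qed.

Lemma iter_phi_inj n w w' : binary_list w -> binary_list w' ->
  Nat.iter n phi w = Nat.iter n phi w' -> w = w'.
Proof.
  revert w w'; induction n as [|n IH]; simpl; auto; intros w w' Hw Hw' E.
  apply IH; auto; apply phi_inj; auto;
    destruct n; simpl; auto using phi_binary.
Qed.

Lemma twice_balanced_code_binary s : binary_list (twice (balanced_code s)).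
Proof.
  intro a; unfold balanced_code; induction s as [|b s IH]; simpl; [tauto|].
  rewrite twice_app, in_app_iff; intros [Ha|Ha]; auto.
  unfold balanced in Ha; destruct (b =? 0); simpl in Ha; lia.
Qed.

Definition coded_factor (n : nat) (s : list nat) : list nat :=
  Nat.iter n phi (twice (balanced_code s)).

Lemma coded_factor_in_M n s : M_factor (d_n n) (coded_factor n s).
Proof.
  set (z := prepend (balanced_code s) (fun _ => 0)); set (x := fun i => z (i / 2)).
  assert (Bz : binary z).
  { intro i; unfold z, prepend; destruct (_ <? _); auto.
    destruct (nth_in_or_default i (balanced_code s) 0) as [Hi|Hi]; [|rewrite Hi; lia].
    apply in_flat_map in Hi as [a [_ Ha]]; unfold balanced in Ha.
    destruct (a =? 0); simpl in Ha; lia. }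
  assert (Hx : in_M (d_n 0) x).
  { apply in_M_d_n_0_of_paired; [intro; apply Bz|intro i; unfold x; f_equal].
    rewrite Nat.mul_comm, Nat.div_mul by lia; apply (Nat.div_unique _ _ _ 1); lia. }
  set (L := length (balanced_code s)).
  assert (Hpre : slice x 0 (2 * L) = twice (balanced_code s)).
  { unfold x; rewrite <- (Nat.mul_0_r 2), slice_halves; unfold z, L; f_equal; apply slice_prepend. }
  rewrite <- (slice_prepend (coded_factor n s) (Nat.iter n Phi (shift x (2 * L)))).
  unfold coded_factor; rewrite <- Hpre, <- iter_Phi_prepend, prepend_slice_shift.
  apply M_factor_slice, iter_Phi_in_M, Hx.
Qed.

Lemma length_coded_factor n s : length (coded_factor n s) =
  length s * (2 * length (Nat.iter n phi [0]) + 2 * length (Nat.iter n phi [1])).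
Proof.
  unfold coded_factor, balanced_code; induction s as [|a s IH].
  - change (twice (flat_map balanced [])) with (@nil nat); now rewrite iter_phi_nil.
  - simpl flat_map; rewrite twice_app, iter_phi_app, length_app, IH.
    unfold balanced; destruct (a =? 0); simpl twice;
      [change [0; 0; 1; 1] with ([0] ++ [0] ++ [1] ++ [1])
      |change [1; 1; 0; 0] with ([1] ++ [1] ++ [0] ++ [0])];
      rewrite !iter_phi_app, !length_app; simpl length; lia.
Qed.

Lemma factor_count_d_n_ge n : exists K, 1 <= K /\
  forall t c, factor_count (d_n n) (t * K) c -> 2 ^ t <= c.
Proof.
  set (K := 2 * length (Nat.iter n phi [0]) + 2 * length (Nat.iter n phi [1])).
  exists K; split.
  { assert (Nat.iter n phi [0] <> []) by (apply iter_phi_nonempty; discriminate).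
    destruct (Nat.iter n phi [0]); [congruence|]; unfold K; simpl; lia. }
  intros t c Hc; rewrite <- (length_words 1), <- (length_map (coded_factor n)).
  apply (factor_count_ge _ _ _ _ Hc).
  - apply NoDup_map_NoDup_ForallPairs; [|apply NoDup_words].
    intros s s' Hs Hs' E; apply in_words in Hs as [_ Hs], Hs' as [_ Hs'].
    apply balanced_code_inj, twice_inj, (iter_phi_inj n); auto;
      apply twice_balanced_code_binary.
  - intros w Hw; apply in_map_iff in Hw as [s [<- Hs]]; apply in_words in Hs as [Hl _].
    split; [now rewrite length_coded_factor, Hl|apply coded_factor_in_M].
Qed.

(** * Few factors of [M phi_inf] *)

Lemma Phi_zero : Phi (fun _ => 0) = (fun _ => 1).
Proof.
  apply (prepend_fixpoint_unique [1]); [discriminate|now rewrite Phi_unfold at 1|].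
  apply functional_extensionality; now intros [|i].
Qed.

Lemma phi_repeat_0 b : phi (repeat 0 b) = repeat 1 b.
Proof. induction b as [|b IH]; simpl; [|rewrite <- IH]; reflexivity. Qed.

(* Unfolding [M phi_inf = M (Phi phi_inf)] twice with [in_M_Phi_inv]. *)
Lemma in_M_phi_inf_cases x : in_M phi_inf x ->
  x = (fun _ => 0) \/ (exists m, x = prepend (repeat 0 m) (fun _ => 1)) \/
  exists a b z, in_M phi_inf z /\ x = prepend (repeat 0 a ++ repeat 1 b) (Phi (Phi z)).
Proof.
  intro Hx; rewrite <- Phi_phi_inf in Hx.
  destruct (in_M_Phi_inv _ _ phi_inf_binary phi_inf_first Hx) as [|[m [y [Hy ->]]]];
    [now left|right].
  rewrite <- Phi_phi_inf in Hy.
  destruct (in_M_Phi_inv _ _ phi_inf_binary phi_inf_first Hy) as [->|[b [z [Hz ->]]]].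
  - left; exists m; now rewrite Phi_zero.
  - right; exists m, b, z; split; auto.
    now rewrite Phi_prepend, phi_repeat_0, prepend_app.
Qed.

Lemma firstn_repeat {A : Type} (c : A) n m : firstn n (repeat c m) = repeat c (Nat.min n m).
Proof. revert m; induction n; intros [|m]; simpl; f_equal; auto. Qed.

Lemma skipn_repeat {A : Type} (c : A) n m : skipn n (repeat c m) = repeat c (m - n).
Proof. revert m; induction n; intros [|m]; simpl; auto. Qed.

Lemma slice_prepend_zeros_ones a b X k n : exists a' b' k',
  a' + b' <= n /\ (k' = 0 \/ a' + b' = 0) /\
  slice (prepend (repeat 0 a ++ repeat 1 b) X) k n =
    repeat 0 a' ++ repeat 1 b' ++ slice X k' (n - a' - b').
Proof.
  set (w := repeat 0 a ++ repeat 1 b).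
  assert (Lw : length w = a + b) by (unfold w; rewrite length_app, !repeat_length; auto).
  assert (Sk : skipn k w = repeat 0 (a - k) ++ repeat 1 (b - (k - a)))
    by (unfold w; rewrite skipn_app, !skipn_repeat, repeat_length; auto).
  destruct (Nat.le_gt_cases (a + b) k).
  - exists 0, 0, (k - (a + b)); split; [lia|split; [auto|]].
    rewrite slice_prepend_ge, Lw by lia; simpl; f_equal; lia.
  - destruct (Nat.le_gt_cases (a + b) (k + n)).
    + exists (a - k), (b - (k - a)), 0; split; [lia|split; [auto|]].
      rewrite slice_prepend_straddle, Sk, <- app_assoc by lia; do 3 f_equal; lia.
    + exists (Nat.min n (a - k)), (n - Nat.min n (a - k)), 0; split; [lia|split; [auto|]].
      rewrite slice_prepend_lt, Sk, firstn_app, !firstn_repeat, !repeat_length by lia.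
      replace (n - Nat.min n (a - k) - (n - Nat.min n (a - k))) with 0 by lia.
      simpl; rewrite app_nil_r; do 2 f_equal; lia.
Qed.

Lemma length_phi_phi_ge w : 3 * length w <= length (phi (phi w)).
Proof.
  induction w as [|a w IH]; [simpl; lia|].
  rewrite phi_cons, phi_app, length_app; destruct a; simpl length; lia.
Qed.

Lemma length_phi_phi_slice_S z q : length (phi (phi (slice z 0 (S q)))) <=
  length (phi (phi (slice z 0 q))) + 5.
Proof. rewrite slice_S, !phi_app, length_app; destruct (z (0 + q)); simpl; lia. Qed.

Lemma slice_Phi_Phi_prefix z q :
  Phi (Phi z) = prepend (phi (phi (slice z 0 q))) (Phi (Phi (shift z q))).
Proof. now rewrite (Phi_prefix z q), Phi_prepend. Qed.

Lemma slice_Phi_Phi_0 z n M : n <= 3 * M ->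
  slice (Phi (Phi z)) 0 n = firstn n (phi (phi (slice z 0 M))).
Proof.
  intro H; rewrite (slice_Phi_Phi_prefix z M), slice_prepend_lt; auto.
  pose proof (length_phi_phi_ge (slice z 0 M)); rewrite length_slice in *; lia.
Qed.

(* The blocks [phi (phi a)] have length at most 5, so every factor of
   [Phi (Phi z)] starts less than 5 letters into the image of a factor of [z]. *)
Lemma slice_Phi_Phi z k n M : n + 4 <= 3 * M -> exists q r, r < 5 /\
  slice (Phi (Phi z)) k n = firstn n (skipn r (phi (phi (slice z q M)))).
Proof.
  intro H.
  destruct (exists_bracket (fun q => length (phi (phi (slice z 0 q))))) with (k := k)
    as [q Hq]; [reflexivity| |].
  { intro q; rewrite slice_S, !phi_app, length_app; destruct (z (0 + q)); simpl; lia. }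
  pose proof (length_phi_phi_slice_S z q).
  exists q, (k - length (phi (phi (slice z 0 q)))); split; [lia|].
  rewrite (slice_Phi_Phi_prefix z q), slice_prepend_ge by lia.
  rewrite (slice_Phi_Phi_prefix (shift z q) M), slice_prepend_lt, slice_shift, Nat.add_0_r;
    auto.
  pose proof (length_phi_phi_ge (slice (shift z q) 0 M)); rewrite length_slice in *; lia.
Qed.

Definition tripling_candidates (N : nat) (L : list (list nat)) : list (list nat) :=
  map (fun p => repeat 0 (fst (fst p)) ++ repeat 1 (snd (fst p)) ++
                  firstn (3 * N - fst (fst p) - snd (fst p)) (phi (phi (snd p))))
      (list_prod (list_prod (seq 0 (S (3 * N))) (seq 0 (S (3 * N)))) L) ++
  map (fun p => firstn (3 * N) (skipn (fst p) (phi (phi (snd p))))) (list_prod (seq 0 5) L) ++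
  map (fun a => repeat 0 a ++ repeat 1 (3 * N - a)) (seq 0 (S (3 * N))).

Lemma length_tripling_candidates N L : length (tripling_candidates N L) =
  S (3 * N) * S (3 * N) * length L + 5 * length L + S (3 * N).
Proof.
  unfold tripling_candidates.
  rewrite !length_app, !length_map, !length_prod, !length_seq; lia.
Qed.

Lemma in_tripling_candidates N L x k :
  (forall w, length w = N + 2 -> M_factor phi_inf w -> In w L) ->
  in_M phi_inf x -> In (slice x k (3 * N)) (tripling_candidates N L).
Proof.
  intros HL Hx; unfold tripling_candidates; rewrite !in_app_iff.
  assert (HLz : forall z q, in_M phi_inf z -> In (slice z q (N + 2)) L)
    by (intros; apply HL; auto using length_slice, M_factor_slice).
  destruct (in_M_phi_inf_cases x Hx) as [->|[[m ->]|[a [b [z [Hz ->]]]]]].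
  - right; right; rewrite slice_const; apply in_map_iff; exists (3 * N).
    rewrite Nat.sub_diag, app_nil_r; split; [auto|apply in_seq; lia].
  - right; right; rewrite <- (app_nil_r (repeat 0 m)); change [] with (repeat 1 0).
    destruct (slice_prepend_zeros_ones m 0 (fun _ => 1) k (3 * N))
      as [a' [b' [k' [H1 [_ ->]]]]].
    rewrite slice_const, <- repeat_app; apply in_map_iff; exists a'.
    split; [do 2 f_equal; lia|apply in_seq; lia].
  - destruct (slice_prepend_zeros_ones a b (Phi (Phi z)) k (3 * N))
      as [a' [b' [k' [H1 [[->|H2] ->]]]]].
    + left; rewrite (slice_Phi_Phi_0 z _ (N + 2)) by lia; apply in_map_iff.
      exists ((a', b'), slice z 0 (N + 2)); split; [reflexivity|].
      apply in_prod; [apply in_prod|]; auto; apply in_seq; lia.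
    + right; left; replace a' with 0 in * by lia; replace b' with 0 in * by lia.
      destruct (slice_Phi_Phi z k' (3 * N - 0 - 0) (N + 2)) as [q [r [Hr ->]]]; [lia|].
      apply in_map_iff; exists (r, slice z q (N + 2)); split; [simpl; f_equal; lia|].
      apply in_prod; auto; apply in_seq; lia.
Qed.

Lemma factor_count_phi_inf_tripling N c c' : factor_count phi_inf (3 * N) c ->
  factor_count phi_inf (N + 2) c' -> c <= 16 * (N + 1) ^ 2 * c'.
Proof.
  intros Hc Hc'; pose proof (factor_count_pos _ _ _ Nat.lt_0_1 Hc').
  destruct Hc' as [L [_ [<- HL]]].
  eapply Nat.le_trans; [apply (factor_count_le _ _ _ (tripling_candidates N L) Hc)|].
  - intros w Hw Hf; destruct (M_factor_inv _ _ Hf) as [x [k [Hx ->]]].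
    rewrite Hw; apply in_tripling_candidates; auto; intros; apply HL; auto.
  - rewrite length_tripling_candidates, Nat.pow_2_r; nia.
Qed.

Lemma phi_inf_count_tripling H : (forall n, factor_count phi_inf n (H n)) ->
  forall N, H (3 * N) <= 16 * H 2 * (N + 1) ^ 2 * H N.
Proof.
  intros HH N; pose proof (factor_count_phi_inf_tripling N _ _ (HH _) (HH (N + 2))).
  pose proof (factor_count_mul _ _ _ _ _ _ (HH N) (HH 2) (HH (N + 2))).
  rewrite Nat.pow_2_r in *; nia.
Qed.

Open Scope R_scope.

Theorem proposition5 :
  (forall n : nat, exists h : R, 0 < h /\ has_entropy (d_n n) h) /\
  has_entropy phi_inf 0.
Proof.
  split.
  - intro n; destruct (entropy_exists (d_n n)) as [h [H [HH Hh]]];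
      [rewrite d_n_first; lia|].
    destruct (factor_count_d_n_ge n) as [K [HK Hlow]].
    exists h; split; [|exists H; auto].
    apply Rlt_le_trans with (ln 2 / INR K).
    + apply Rdiv_lt_0_compat; [pose proof ln_lt_2; lra|apply lt_0_INR; lia].
    + apply (log_ratio_lim_ge H); auto.
  - destruct (entropy_exists phi_inf) as [h [H [HH Hh]]]; [rewrite phi_inf_first; lia|].
    enough (h = 0) by (subst; exists H; auto).
    apply (entropy_zero_of_tripling H (16 * H 2%nat)); auto using phi_inf_count_tripling.
    intro n; eapply factor_count_pos; [|apply HH]; rewrite phi_inf_first; lia.
Qed.
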